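(* For all $n\ge2$, $\mathfrak a_2^\pi(n)=\{g\in\mathfrak{so}(2^n): gZ^{\otimes n}=Z^{\otimes n}g\}$.
   Context: Pauli matrices $I,X,Y,Z$; $A_iB_j$ ($i\ne j$) denotes the length-$n$ Pauli string with $A$ at position $i$, $B$ at position $j$, $I$ elsewhere. $\mathfrak{so}(N)$ is the Lie algebra of real skew-symmetric $N\times N$ matrices. For a set $S$ of Pauli strings, $\mathrm{Lie}\langle S\rangle$ is the smallest real Lie subalgebra of $\mathfrak u(2^n)$ containing $\{iP:P\in S\}$. $\mathfrak a_2^\pi(n)=\mathrm{Lie}\langle X_iY_j,\,Y_iX_j:1\le i\ne j\le n\rangle$. *)

From HB Require Import structures.
From mathcomp Require Import all_boot all_order all_algebra all_field.
Set Implicit Arguments. Unset Strict Implicit. Unset Printing Implicit Defensive.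
Import Order.TTheory GRing.Theory Num.Theory.
Local Open Scope ring_scope.

(* Complex numbers: algC (algebraic complex numbers, closed under all
   operations needed here).  Qubit k of a basis index a : 'I_(2^n) is
   the k-th binary digit of a. *)

Inductive pauli := PI | PX | PY | PZ.

Definition bit (k a : nat) : bool := odd (a %/ 2 ^ k).

(* single-qubit Pauli matrices, entry (row a, column b), false = |0>, true = |1> *)
Definition pauli_entry (p : pauli) (a b : bool) : algC :=
  match p with
  | PI => if a == b then 1 else 0
  | PX => if a != b then 1 else 0
  | PY => if a == b then 0 else if b then - 'i else 'i
  | PZ => if a == b then (if a then -1 else 1) else 0
  end.

Definition pauli_string (n : nat) (s : 'I_n -> pauli) : 'M[algC]_(2 ^ n) :=
  \matrix_(a < 2 ^ n, b < 2 ^ n) \prod_(k < n) pauli_entry (s k) (bit k a) (bit k b).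

Definition two_site (n : nat) (A B : pauli) (i j : 'I_n) : 'M[algC]_(2 ^ n) :=
  pauli_string (fun k => if k == i then A else if k == j then B else PI).

Definition Zall (n : nat) : 'M[algC]_(2 ^ n) := pauli_string (fun _ => PZ).

Inductive lie_closure (N : nat) (S : 'M[algC]_N -> Prop) : 'M[algC]_N -> Prop :=
  | lie_base g : S g -> lie_closure S g
  | lie_zero : lie_closure S 0
  | lie_add g h : lie_closure S g -> lie_closure S h -> lie_closure S (g + h)
  | lie_scale (r : algC) g : r \is Num.real -> lie_closure S g -> lie_closure S (r *: g)
  | lie_bracket g h : lie_closure S g -> lie_closure S h ->
      lie_closure S (g *m h - h *m g).

Definition a2pi_gens (n : nat) (g : 'M[algC]_(2 ^ n)) : Prop :=
  exists i j : 'I_n, i != j /\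
    (g = 'i *: two_site PX PY i j \/ g = 'i *: two_site PY PX i j).

Definition a2pi (n : nat) : 'M[algC]_(2 ^ n) -> Prop := lie_closure (@a2pi_gens n).

Definition in_so (N : nat) (g : 'M[algC]_N) : Prop :=
  (forall a b, g a b \is Num.real) /\ g^T = - g.

From mathcomp Require Import all_boot all_order all_algebra all_field.
From Stdlib Require PeanoNat.
From mathcomp Require Import ring.
Set Implicit Arguments. Unset Strict Implicit.
Import GRing.Theory Num.Theory.
Local Open Scope ring_scope.

(* The generators
   i X_i Y_j and i Y_i X_j are real signed permutation matrices flipping the bits
   i and j; they are skew-symmetric and preserve the parity of the bit string,
   i.e. commute with Z^{⊗n}, and both properties pass to the Lie closure.
   Conversely, a real skew-symmetric g commuting with Z^{⊗n} is a real
   combination of the rotations e_xy - e_yx between strings x, y of equal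
   parity.  Commutators of the generators localise a two-bit flip to the
   strings agreeing with a fixed string a off these two bits, which yields the
   rotations between a and a with two bits flipped; brackets of such rotations
   connect any two strings of equal parity, since these differ in an even
   number of bits. *)

Lemma expn_Natpow (a b : nat) : (a ^ b)%N = Nat.pow a b.
Proof. by elim: b => [|b IH] //; rewrite expnS IH /= multE mulnC. Qed.

Lemma odd_Natodd (x : nat) : odd x = Nat.odd x.
Proof.
by elim: x => [|x IH] //; rewrite /= PeanoNat.Nat.odd_succ -PeanoNat.Nat.negb_odd IH.
Qed.

Lemma bit_testbit (k a : nat) : bit k a = Nat.testbit a k.
Proof.
have -> : bit k a = Nat.odd (Nat.div a (Nat.pow 2 k)).
  rewrite /bit odd_Natodd; congr Nat.odd.
  apply: (PeanoNat.Nat.div_unique _ _ _ (a %% 2 ^ k)%N).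
  - by rewrite -expn_Natpow; apply/ltP; rewrite ltn_pmod // expn_gt0.
  - by rewrite -expn_Natpow {1}(divn_eq a (2 ^ k)) mulnC.
by rewrite -(PeanoNat.Nat.div_pow2_bits a k 0).
Qed.

Lemma testbit_ltn_exp (n a m : nat) :
  (a < 2 ^ n)%N -> (n <= m)%N -> Nat.testbit a m = false.
Proof.
move=> ha hm; have [->|a0] := PeanoNat.Nat.eq_dec a 0.
  exact: PeanoNat.Nat.bits_0.
apply: PeanoNat.Nat.bits_above_log2; apply/PeanoNat.Nat.log2_lt_pow2.
  by apply/ltP; rewrite lt0n; apply/eqP.
by rewrite -expn_Natpow; apply/ltP; apply: leq_trans ha _; rewrite leq_exp2l.
Qed.

Lemma ltn_exp_testbit (n a : nat) :
  (forall m, (n <= m)%N -> Nat.testbit a m = false) -> (a < 2 ^ n)%N.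
Proof.
move=> hi; have -> : a = Nat.modulo a (Nat.pow 2 n).
  apply: PeanoNat.Nat.bits_inj => m; have [hm|hm] := leqP n m.
    by rewrite hi // PeanoNat.Nat.mod_pow2_bits_high //; apply/leP.
  by rewrite PeanoNat.Nat.mod_pow2_bits_low //; apply/ltP.
rewrite expn_Natpow; apply/ltP/PeanoNat.Nat.mod_upper_bound.
by rewrite -expn_Natpow; apply/eqP; rewrite -lt0n expn_gt0.
Qed.

Section BitStrings.

Variable n : nat.
Implicit Types (a b c x y : 'I_(2 ^ n)) (i j k l : 'I_n).

Lemma bxor_subproof a b : (Nat.lxor a b < 2 ^ n)%N.
Proof.
apply: ltn_exp_testbit => m hm; rewrite PeanoNat.Nat.lxor_spec.
by rewrite !(@testbit_ltn_exp n _ m) // ltn_ord.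
Qed.

Definition bxor a b : 'I_(2 ^ n) := Ordinal (bxor_subproof a b).

Lemma ebit_subproof i : (2 ^ i < 2 ^ n)%N.
Proof. by rewrite ltn_exp2l. Qed.

Definition ebit i : 'I_(2 ^ n) := Ordinal (ebit_subproof i).

Definition idx0 : 'I_(2 ^ n) := Ordinal (expn_gt0 2 n).

Lemma bit_bxor a b k : bit k (bxor a b) = bit k a (+) bit k b.
Proof.
by rewrite !bit_testbit /= PeanoNat.Nat.lxor_spec; do 2!case: Nat.testbit.
Qed.

Lemma bit_ebit i k : bit k (ebit i) = (k == i).
Proof.
rewrite bit_testbit /= expn_Natpow PeanoNat.Nat.pow2_bits_eqb.
case: PeanoNat.Nat.eqb_spec => [/val_inj -> | ne]; first by rewrite eqxx.
by case: eqP => // eq_ki; case: ne; rewrite eq_ki.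
Qed.

Lemma bit_idx0 k : bit k idx0 = false.
Proof. by rewrite bit_testbit PeanoNat.Nat.bits_0. Qed.

Lemma bits_inj a b : (forall k, bit k a = bit k b) -> a = b.
Proof.
move=> eq_ab; apply/val_inj/PeanoNat.Nat.bits_inj => m.
have [hm|hm] := ltnP m n; first by have := eq_ab (Ordinal hm); rewrite !bit_testbit.
by rewrite !(@testbit_ltn_exp n _ m) // ltn_ord.
Qed.

Lemma eq_bits a b : (a == b) = [forall k : 'I_n, bit k a == bit k b].
Proof. by apply/eqP/forallP => [-> // | eq_ab]; apply: bits_inj => k; apply/eqP. Qed.

Lemma bxorA : associative bxor.
Proof.
by move=> a b c; apply: bits_inj => k; rewrite !bit_bxor addbA.
Qed.

Lemma bxorC : commutative bxor.
Proof. by move=> a b; apply: bits_inj => k; rewrite !bit_bxor addbC. Qed.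

Lemma bxor0 a : bxor a idx0 = a.
Proof. by apply: bits_inj => k; rewrite bit_bxor bit_idx0 addbF. Qed.

Lemma bxorK b : cancel (bxor^~ b) (bxor^~ b).
Proof. by move=> a; apply: bits_inj => k; rewrite !bit_bxor addbK. Qed.

Lemma bxorxx a : bxor a a = idx0.
Proof. by apply: bits_inj => k; rewrite bit_bxor bit_idx0 addbb. Qed.

Lemma bxor_chain a b c : bxor (bxor a b) (bxor b c) = bxor a c.
Proof. by rewrite bxorA bxorK. Qed.

Definition flip2 a i j : 'I_(2 ^ n) := bxor a (bxor (ebit i) (ebit j)).

Lemma bit_flip2 a i j k : bit k (flip2 a i j) = bit k a (+) (k == i) (+) (k == j).
Proof. by rewrite !bit_bxor !bit_ebit addbA. Qed.

Lemma bxor_flip2 a i j : bxor a (flip2 a i j) = bxor (ebit i) (ebit j).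
Proof. by rewrite /flip2 bxorA bxorxx bxorC bxor0. Qed.

Lemma flip2_neq a i j : i != j -> a != flip2 a i j.
Proof.
move=> /negPf ne_ij; apply/eqP => /(congr1 (fun z : 'I_(2 ^ n) => bit i z)).
by rewrite bit_flip2 eqxx ne_ij addbF; case: bit.
Qed.

Definition hamming x y : nat := #|[set k : 'I_n | bit k x != bit k y]|.

End BitStrings.

Arguments idx0 {n}.

(* The diagonal matrix [f] followed by the bit flip by the mask [m].  Pauli
   strings have this form, and such matrices multiply by xoring the masks. *)
Section FlipMatrices.

Variable n : nat.
Implicit Types (m x y : 'I_(2 ^ n)) (f h : 'I_(2 ^ n) -> algC).

Definition flipmx m f : 'M[algC]_(2 ^ n) :=
  \matrix_(x, y) if x == bxor y m then f y else 0.

Lemma eq_flipmx m f h : f =1 h -> flipmx m f = flipmx m h.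
Proof. by move=> eq_fh; apply/matrixP => x y; rewrite !mxE eq_fh. Qed.

Lemma flipmxD m f h : flipmx m f + flipmx m h = flipmx m (fun y => f y + h y).
Proof. by apply/matrixP => x y; rewrite !mxE; case: eqP; rewrite ?addr0. Qed.

Lemma flipmxZ m r f : r *: flipmx m f = flipmx m (fun y => r * f y).
Proof. by apply/matrixP => x y; rewrite !mxE; case: eqP; rewrite ?mulr0. Qed.

Lemma flipmxN m f : - flipmx m f = flipmx m (fun y => - f y).
Proof. by apply/matrixP => x y; rewrite !mxE; case: eqP; rewrite ?oppr0. Qed.

Lemma flipmxB m f h : flipmx m f - flipmx m h = flipmx m (fun y => f y - h y).
Proof. by rewrite flipmxN flipmxD. Qed.

Lemma mul_flipmx m1 m2 f1 f2 :
  flipmx m1 f1 *m flipmx m2 f2 = flipmx (bxor m1 m2) (fun y => f1 (bxor y m2) * f2 y).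
Proof.
apply/matrixP => x z; rewrite !mxE (bigD1 (bxor z m2)) //= big1 ?addr0.
  by rewrite !mxE eqxx -bxorA (bxorC m2); case: eqP; rewrite ?mul0r.
by move=> y /negPf ne; rewrite !mxE ne mulr0.
Qed.

Lemma trmx_flipmx m f : (flipmx m f)^T = flipmx m (fun y => f (bxor y m)).
Proof.
apply/matrixP => x y; rewrite !mxE.
have [->|ne] := eqVneq y (bxor x m); first by rewrite bxorK eqxx.
by case: eqP => // ex; case/eqP: ne; rewrite ex bxorK.
Qed.

Lemma mul_mx_flipmx0E (A : 'M[algC]_(2 ^ n)) f x y :
  (A *m flipmx idx0 f) x y = A x y * f y.
Proof.
rewrite !mxE (bigD1 y) //= big1 ?addr0; first by rewrite mxE bxor0 eqxx.
by move=> z /negPf ne; rewrite mxE bxor0 ne mulr0.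
Qed.

Lemma mul_flipmx0E (A : 'M[algC]_(2 ^ n)) f x y :
  (flipmx idx0 f *m A) x y = f x * A x y.
Proof.
rewrite !mxE (bigD1 x) //= big1 ?addr0; first by rewrite mxE bxor0 eqxx.
by move=> z ne; rewrite mxE bxor0 eq_sym (negPf ne) mul0r.
Qed.

End FlipMatrices.

Definition bsign (b : bool) : algC := if b then 1 else -1.

Lemma bsign_real b : bsign b \is Num.real.
Proof. by case: b; rewrite ?rpredN rpred1. Qed.

Lemma eqb_bsign b c : (b == c)%:R = 2^-1 + 2^-1 * bsign c * bsign b :> algC.
Proof. by case: b; case: c => /=; field. Qed.

Definition pauli_flip (p : pauli) : bool :=
  match p with PX | PY => true | _ => false end.

Definition pauli_phase (p : pauli) (b : bool) : algC :=
  match p with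
  | PI | PX => 1
  | PY => if b then - 'i else 'i
  | PZ => bsign (~~ b)
  end.

Lemma pauli_entryE p a b :
  pauli_entry p a b = if a == b (+) pauli_flip p then pauli_phase p b else 0.
Proof. by case: p; case: a; case: b. Qed.

Section PauliStrings.

Variable n : nat.
Implicit Types (x y : 'I_(2 ^ n)) (i j k l : 'I_n).

Lemma pauli_stringE (s : 'I_n -> pauli) x y : pauli_string s x y =
  if [forall k : 'I_n, bit k x == bit k y (+) pauli_flip (s k)]
  then \prod_(k < n) pauli_phase (s k) (bit k y) else 0.
Proof.
rewrite mxE (eq_bigr _ (fun k _ => pauli_entryE _ _ _)).
case: (boolP [forall k, _]) => [flips | /forallPn[k nflip]].
  by apply: eq_bigr => k _; rewrite (forallP flips k).
by rewrite (bigD1 k) //= (negPf nflip) mul0r.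
Qed.

Definition parity y : algC := \prod_(k < n) bsign (~~ bit k y).

Lemma Zall_flipmx : Zall n = flipmx idx0 parity.
Proof.
apply/matrixP => x y; rewrite pauli_stringE !mxE bxor0 eq_bits.
by congr (if _ then _ else _); apply: eq_forallb => k; rewrite addbF.
Qed.

Lemma parity_flip y l : parity (bxor y (ebit l)) = - parity y.
Proof.
rewrite /parity (bigD1 l) // [in RHS](bigD1 l) // bit_bxor bit_ebit eqxx.
rewrite (eq_bigr (fun k => bsign (~~ bit k y))); last first.
  by move=> k /negPf ne; rewrite bit_bxor bit_ebit ne addbF.
by case: (bit l y); rewrite /= ?mulNr ?opprK ?mul1r.
Qed.

Lemma parity_flip2 y i j : parity (flip2 y i j) = parity y.
Proof. by rewrite /flip2 bxorA !parity_flip opprK. Qed.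

Lemma parity_flip_neq y l : parity (bxor y (ebit l)) != parity y.
Proof.
have parity_pm : parity y = 1 \/ parity y = -1.
  apply: (big_ind (fun v : algC => v = 1 \/ v = -1)) => [|u v [->|->] [->|->]|k _];
    rewrite ?mul1r ?mulN1r ?opprK; try case: (bit k y); by [left | right].
rewrite parity_flip -subr_eq0 -opprD oppr_eq0 -mulr2n mulrn_eq0 /=.
by case: parity_pm => ->; rewrite ?oppr_eq0 oner_eq0.
Qed.

Lemma two_siteE A B i j x y : i != j -> pauli_flip A -> pauli_flip B ->
  two_site A B i j x y =
  if x == bxor y (bxor (ebit i) (ebit j))
  then pauli_phase A (bit i y) * pauli_phase B (bit j y) else 0.
Proof.
move=> ne_ij flipA flipB; rewrite /two_site pauli_stringE eq_bits.
rewrite (eq_forallb (P2 := fun k => bit k x == bit k (bxor y (bxor (ebit i) (ebit j))))); last first.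
  move=> k; rewrite !bit_bxor !bit_ebit.
  have [->|ne_ki] := eqVneq k i; first by rewrite flipA (negPf ne_ij).
  by have [->|ne_kj] := eqVneq k j; rewrite ?flipB ?addbF.
case: ifP => // _; rewrite (bigD1 i) //= (bigD1 j) 1?eq_sym //= eqxx.
rewrite eq_sym (negPf ne_ij) eqxx big1 ?mulr1 //.
by move=> k /andP[/negPf -> /negPf ->].
Qed.

Definition xy_gen i j : 'M[algC]_(2 ^ n) :=
  flipmx (bxor (ebit i) (ebit j)) (fun y => bsign (bit j y)).

Lemma two_site_XY i j : i != j -> 'i *: two_site PX PY i j = xy_gen i j.
Proof.
move=> ne_ij; apply/matrixP => x y; rewrite mxE two_siteE // !mxE.
by case: ifP; rewrite ?mulr0 //= mul1r; case: bit; rewrite ?mulrN mulCii ?opprK.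
Qed.

Lemma two_site_YX i j : i != j -> 'i *: two_site PY PX i j = xy_gen j i.
Proof.
move=> ne_ij; apply/matrixP => x y; rewrite mxE two_siteE // !mxE (bxorC (ebit i)).
by case: ifP; rewrite ?mulr0 //= mulr1; case: bit; rewrite ?mulrN mulCii ?opprK.
Qed.

Lemma xy_gen_so i j : i != j -> in_so (xy_gen i j).
Proof.
move=> ne_ij; split.
  by move=> a b; rewrite !mxE; case: ifP; rewrite ?bsign_real ?rpred0.
rewrite /xy_gen trmx_flipmx flipmxN; apply: eq_flipmx => y.
rewrite !bit_bxor !bit_ebit eqxx eq_sym (negPf ne_ij).
by case: (bit j y); rewrite /= ?opprK.
Qed.

Lemma xy_gen_comm i j : comm_mx (Zall n) (xy_gen i j).
Proof.
rewrite /comm_mx Zall_flipmx /xy_gen !mul_flipmx bxor0 bxorC bxor0.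
by apply: eq_flipmx => y; rewrite bxor0 parity_flip2 mulrC.
Qed.

End PauliStrings.

Section LieClosure.

Variables (N : nat) (S : 'M[algC]_N -> Prop).
Implicit Types (g h : 'M[algC]_N).

Lemma lie_closure_sum I (r : seq I) (P : pred I) (F : I -> 'M[algC]_N) :
  (forall i, P i -> lie_closure S (F i)) -> lie_closure S (\sum_(i <- r | P i) F i).
Proof. by move=> SF; apply: big_ind => //; [apply: lie_zero | apply: lie_add]. Qed.

Lemma in_so0 : in_so (0 : 'M[algC]_N).
Proof. by split=> [a b|]; rewrite ?mxE ?rpred0 // trmx0 oppr0. Qed.

Lemma in_soD g h : in_so g -> in_so h -> in_so (g + h).
Proof.
move=> [rg tg] [rh th]; split=> [a b|]; first by rewrite mxE rpredD.
by rewrite linearD /= tg th opprD.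
Qed.

Lemma in_soZ r g : r \is Num.real -> in_so g -> in_so (r *: g).
Proof.
move=> rr [rg tg]; split=> [a b|]; first by rewrite mxE rpredM.
by rewrite linearZ /= tg scalerN.
Qed.

Lemma in_so_bracket g h : in_so g -> in_so h -> in_so (g *m h - h *m g).
Proof.
move=> [rg tg] [rh th]; split=> [a b|].
  by rewrite !mxE rpredB //; apply: rpred_sum => k _; rewrite rpredM.
by rewrite linearB /= !trmx_mul tg th !mulmxN !mulNmx !opprK opprB.
Qed.

Lemma lie_closure_so_comm (Z : 'M[algC]_N) :
  (forall g, S g -> in_so g /\ comm_mx Z g) ->
  forall g, lie_closure S g -> in_so g /\ comm_mx Z g.
Proof.
move=> SP g; elim=> {g} [g /SP // | | g h _ [sg cg] _ [sh ch]
                       | r g rr _ [sg cg] | g h _ [sg cg] _ [sh ch]].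
- by split; [apply: in_so0 | apply: comm_mx0].
- by split; [apply: in_soD | apply: comm_mxD].
- by split; [apply: in_soZ | rewrite /comm_mx -scalemxAr cg scalemxAl].
- by split; [apply: in_so_bracket | apply/comm_mxB; apply: comm_mxM].
Qed.

Definition rotmx (a b : 'I_N) : 'M[algC]_N := delta_mx a b - delta_mx b a.

Lemma skew_sum_rotmx g : g^T = - g ->
  g = \sum_x \sum_y (g x y / 2) *: rotmx x y.
Proof.
move=> tg; have g_skew x y : g y x = - g x y.
  by have := congr1 (fun M : 'M[algC]_N => M x y) tg; rewrite !mxE.
set C := \matrix_(x, y) (g x y / 2).
have sum_delta : \sum_x \sum_y C x y *: delta_mx x y = C by rewrite -matrix_sum_delta.
have sum_delta_tr : \sum_x \sum_y C x y *: delta_mx y x = C^T.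
  rewrite exchange_big /= [RHS]matrix_sum_delta.
  by apply: eq_bigr => y _; apply: eq_bigr => x _; rewrite !mxE.
rewrite (eq_bigr (fun x => \sum_y C x y *: delta_mx x y - \sum_y C x y *: delta_mx y x)).
  by rewrite sumrB sum_delta sum_delta_tr; apply/matrixP => x y; rewrite !mxE g_skew; field.
by move=> x _; rewrite -sumrB; apply: eq_bigr => y _; rewrite mxE scalerBr.
Qed.

Lemma bracket_rotmx x c y : x != c -> c != y -> x != y ->
  rotmx x c *m rotmx c y - rotmx c y *m rotmx x c = rotmx x y.
Proof.
move=> /negPf ne_xc /negPf ne_cy /negPf ne_xy.
rewrite /rotmx !mulmxBl !mulmxBr !mul_delta_mx_cond eqxx ne_cy ne_xc ne_xy.
by rewrite eq_sym ne_xy eq_sym ne_cy eq_sym ne_xc !mulr0n !mulr1n !subr0 !sub0r !opprK.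
Qed.

End LieClosure.

Lemma a2pi_so_comm n (g : 'M[algC]_(2 ^ n)) : a2pi g -> in_so g /\ comm_mx (Zall n) g.
Proof.
apply: lie_closure_so_comm => _ [i [j [ne_ij [->|->]]]].
  by rewrite two_site_XY //; split; [apply: xy_gen_so | apply: xy_gen_comm].
by rewrite two_site_YX //; split; [apply: xy_gen_so; rewrite eq_sym | apply: xy_gen_comm].
Qed.

Section Localization.

Variable n : nat.
Implicit Types (a x y : 'I_(2 ^ n)) (i j k l : 'I_n) (U : {set 'I_n}).

Lemma xy_gen_a2pi i j : i != j -> a2pi (xy_gen i j).
Proof. by move=> ne_ij; apply: lie_base; exists i, j; split => //; left; rewrite two_site_XY. Qed.

Definition agreeb U a y : bool := [forall k in U, bit k y == bit k a].

Definition local_xy_gen U a i j : 'M[algC]_(2 ^ n) :=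
  flipmx (bxor (ebit i) (ebit j)) (fun y => bsign (bit j y) * (agreeb U a y)%:R).

Lemma agreeb_set0 a y : agreeb set0 a y.
Proof. by apply/forall_inP => k; rewrite inE. Qed.

Lemma agreeb_setD1 U k a y : k \in U ->
  agreeb U a y = agreeb (U :\ k) a y && (bit k y == bit k a).
Proof.
move=> Uk; apply/forall_inP/andP => [agree | [/forall_inP agree eq_k] l Ul].
  by split; [apply/forall_inP => l /setD1P[_ /agree] | apply: agree].
by have [-> // | ne_lk] := eqVneq l k; apply: agree; rewrite !inE ne_lk.
Qed.

Lemma agreeb_flip2 U a y i j : i \notin U -> j \notin U ->
  agreeb U a (flip2 y i j) = agreeb U a y.
Proof.
move=> Ui Uj; apply: eq_forallb_in => l Ul; rewrite bit_flip2.
have /negPf-> : l != i by apply: contraNneq Ui => <-.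
have /negPf-> : l != j by apply: contraNneq Uj => <-.
by rewrite !addbF.
Qed.

Lemma agreebC U a y : agreeb U a y = agreeb U y a.
Proof. by apply: eq_forallb_in => k _; rewrite eq_sym. Qed.

Lemma eq_agreeb2 i j a y : (y == a) =
  [&& bit i y == bit i a, bit j y == bit j a & agreeb (~: [set i; j]) a y].
Proof.
rewrite eq_bits; apply/forallP/and3P => [eq_ya | [eq_i eq_j /forall_inP eq_U] k].
  by split; rewrite ?eq_ya //; apply/forall_inP => k _; apply: eq_ya.
have [-> // | ne_ki] := eqVneq k i; have [-> // | ne_kj] := eqVneq k j.
by apply: eq_U; rewrite !inE negb_or ne_ki.
Qed.

Definition local_gens_a2pi U : Prop :=
  forall i j, i != j -> i \notin U -> j \notin U ->
  forall a, a2pi (local_xy_gen U a i j).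

Lemma local_gens_set0 : local_gens_a2pi set0.
Proof.
move=> i j ne_ij _ _ a; rewrite /local_xy_gen.
under eq_flipmx do rewrite agreeb_set0 mulr1.
exact: xy_gen_a2pi.
Qed.

(* The bracket of [local_xy_gen (U :\ k) a i k] with [xy_gen k j] is
   [local_xy_gen (U :\ k) a i j] twisted by the sign of bit k; averaging the two
   imposes that bit k agree with [a]. *)
Lemma local_gens_setD1 U k : k \in U -> local_gens_a2pi (U :\ k) -> local_gens_a2pi U.
Proof.
move=> Uk IH i j ne_ij Ui Uj a.
have U'i : i \notin U :\ k by rewrite !inE negb_and Ui orbT.
have U'j : j \notin U :\ k by rewrite !inE negb_and Uj orbT.
have U'k : k \notin U :\ k by rewrite !inE eqxx.
have ne_ik : i != k by apply: contraNneq Ui => ->.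
have ne_kj : k != j by apply: contraNneq Uj => <-.
have half_real : (2^-1 : algC) \is Num.real by rewrite rpredV rpred_nat.
have coef_real : (- bsign (bit k a) / 4 : algC) \is Num.real.
  by rewrite rpredM ?rpredN ?bsign_real // rpredV rpred_nat.
have := lie_add (lie_scale half_real (IH i j ne_ij U'i U'j a))
  (lie_scale coef_real (lie_bracket (IH i k ne_ik U'i U'k a) (xy_gen_a2pi ne_kj))).
rewrite /local_xy_gen /xy_gen !mul_flipmx bxor_chain (bxorC (bxor (ebit k) _)) bxor_chain.
rewrite flipmxB !flipmxZ flipmxD; congr a2pi; apply: eq_flipmx => y.
rewrite (agreeb_setD1 _ _ Uk) -mulnb natrM eqb_bsign !agreeb_flip2 //.
rewrite !bit_bxor !bit_ebit eqxx (negPf ne_kj) ![j == _]eq_sym (negPf ne_ij) (negPf ne_kj).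
by case: (bit k y); case: (bit j y); case: (bit k a); rewrite /bsign /=; field.
Qed.

Lemma local_gens_all U : local_gens_a2pi U.
Proof.
move: {2}#|U| (erefl #|U|) => d; elim: d U => [|d IH] U cardU.
  by move/eqP: cardU; rewrite cards_eq0 => /eqP ->; apply: local_gens_set0.
have /set0Pn[k Uk] : U != set0 by rewrite -card_gt0 cardU.
apply: (local_gens_setD1 Uk); apply: IH.
by move: cardU; rewrite (cardsD1 k) Uk => -[].
Qed.

End Localization.

Section Rotations.

Variable n : nat.
Implicit Types (a b x y : 'I_(2 ^ n)) (i j k l : 'I_n).

Lemma rotmx_flipmx a b : a != b ->
  rotmx a b = flipmx (bxor a b) (fun y => (y == b)%:R - (y == a)%:R).
Proof.
move=> ne_ab; apply/matrixP => x y; rewrite !mxE.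
have [->|ne_yb] := eqVneq y b.
  rewrite bxorC bxorK (eq_sym b) (negPf ne_ab) andbF.
  by case: (x == a); rewrite /= ?mulr1n ?mulr0n ?subr0.
have [->|ne_ya] := eqVneq y a.
  rewrite bxorA bxorxx bxorC bxor0 andbF andbT.
  by case: eqP; rewrite /= ?mulr1n ?mulr0n ?subrr ?sub0r ?oppr0.
by rewrite !andbF /= mulr0n subrr; case: ifP.
Qed.

Lemma rotmx_flip2_a2pi a i j : i != j -> a2pi (rotmx a (flip2 a i j)).
Proof.
move=> ne_ij; set U := ~: [set i; j]; set b := flip2 a i j.
have [Ui Uj] : i \notin U /\ j \notin U by rewrite !inE !eqxx orbT.
have ne_ji : j != i by rewrite eq_sym.
have coef_real l : (- bsign (bit l a) / 2 : algC) \is Num.real.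
  by rewrite rpredM ?rpredN ?bsign_real // rpredV rpred_nat.
have bit_b : bit i b = ~~ bit i a /\ bit j b = ~~ bit j a.
  by rewrite !bit_flip2 !eqxx (negPf ne_ij) (negPf ne_ji) !addbF !addbT.
have ne_ab : a != b by apply: flip2_neq.
have := lie_add (lie_scale (coef_real i) (local_gens_all ne_ji Uj Ui a))
                (lie_scale (coef_real j) (local_gens_all ne_ij Ui Uj a)).
rewrite /local_xy_gen (bxorC (ebit j)) !flipmxZ flipmxD (rotmx_flipmx ne_ab).
rewrite bxor_flip2; congr a2pi; apply: eq_flipmx => y.
rewrite (eq_agreeb2 i j a) (eq_agreeb2 i j b) (agreebC U b) agreeb_flip2 // -agreebC.
case: bit_b => -> ->; case: agreeb; rewrite /= ?andbF ?mulr0 ?mulr0n ?subrr ?addr0 //.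
by case: (bit i y); case: (bit j y); case: (bit i a); case: (bit j a); rewrite /bsign /=; field.
Qed.

Lemma flip2_closer x y : parity x = parity y -> x != y ->
  exists k l, k != l /\ (hamming (flip2 x k l) y < hamming x y)%N.
Proof.
move=> eq_par; rewrite eq_bits => /forallPn[k ne_k].
have : bxor x (ebit k) != y by apply: contraTneq (parity_flip_neq x k) => ->; rewrite eq_par eqxx.
rewrite eq_bits => /forallPn[l]; rewrite bit_bxor bit_ebit => ne_l.
have ne_lk : l != k by apply: contraNneq ne_l => ->; rewrite eqxx; case: bit ne_k; case: bit.
exists k, l; split; first by rewrite eq_sym.
rewrite /hamming; set D := [set m : 'I_n | bit m x != bit m y].
apply: (@leq_ltn_trans #|D :\ k|); last by rewrite (cardsD1 k D) inE ne_k.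
apply/subset_leq_card/subsetP => m; rewrite !inE bit_flip2.
have [-> | ne_mk] := eqVneq m k.
  by rewrite (eq_sym k l) (negPf ne_lk) addbF addbT; case: (bit k x) ne_k; case: (bit k y).
have [-> | ne_ml] := eqVneq m l; last by rewrite !addbF.
by move: ne_l; rewrite (negPf ne_lk) addbF => ->.
Qed.

(* [rotmx x y] is the bracket of [rotmx x c] and [rotmx c y] for a string c two
   bit flips away from x and closer to y. *)
Lemma rotmx_a2pi x y : parity x = parity y -> a2pi (rotmx x y).
Proof.
move: {2}(hamming x y) (leqnn (hamming x y)) => d.
elim: d x => [|d IH] x le_d eq_par; (have [-> | ne_xy] := eqVneq x y;
  first by rewrite /rotmx subrr; apply: lie_zero);
  have [k [l [ne_kl closer]]] := flip2_closer eq_par ne_xy.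
  by move: (leq_trans closer le_d).
have base := rotmx_flip2_a2pi x ne_kl.
have [<- // | ne_cy] := eqVneq (flip2 x k l) y.
rewrite -(bracket_rotmx (flip2_neq x ne_kl) ne_cy ne_xy); apply: lie_bracket base (IH _ _ _).
  by rewrite -ltnS (leq_trans closer le_d).
by rewrite parity_flip2.
Qed.

Lemma comm_Zall_parity g x y :
  comm_mx (Zall n) g -> parity x != parity y -> g x y = 0.
Proof.
move=> /(congr1 (fun M : 'M[algC]_(2 ^ n) => M x y)) + ne_par; rewrite Zall_flipmx.
rewrite mul_flipmx0E mul_mx_flipmx0E mulrC => /eqP.
by rewrite -subr_eq0 -mulrBr mulf_eq0 subr_eq0 (negPf ne_par) orbF => /eqP.
Qed.

Lemma so_comm_a2pi g : in_so g -> comm_mx (Zall n) g -> a2pi g.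
Proof.
move=> [g_real g_skew] g_comm; rewrite (skew_sum_rotmx g_skew).
apply: lie_closure_sum => x _; apply: lie_closure_sum => y _.
have [eq_par | ne_par] := eqVneq (parity x) (parity y).
  by apply: lie_scale (rotmx_a2pi eq_par); rewrite rpredM ?g_real // rpredV rpred_nat.
by rewrite comm_Zall_parity // mul0r scale0r; apply: lie_zero.
Qed.

End Rotations.

Theorem mainTheorem19 (n : nat) (hn : (2 <= n)%N) (g : 'M[algC]_(2 ^ n)) :
  a2pi g <-> (in_so g /\ g *m Zall n = Zall n *m g).
Proof.
split=> [/a2pi_so_comm[so_g /comm_mx_sym //] | [so_g /comm_mx_sym]].
exact: so_comm_a2pi.
Qed.
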